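(* Let $R$ be a $*$-ring with unity and $I$ a $*$-ideal of $R$. If $R$ has generalized comparability for elements, then the quotient $*$-ring $R/I$ has generalized comparability for elements.
   Context: A $*$-ideal is a two-sided ideal $I$ with $a^*\in I$ whenever $a\in I$; $R/I$ carries the involution $(a+I)^*=a^*+I$. Natural partial order: $a\leq b$ iff there is $x$ with $a=xa=xb=ax^*=bx^*$. Equivalence: $a\sim b$ iff there exist $x,y$ with $aa^*=xx^*$, $bb^*=yy^*$, $a^*a=y^*y$, $b^*b=x^*x$, $x=ax=xb$, $y=by=ya$. Dominance: $a\lesssim b$ iff $a\sim c\leq b$ for some $c$. A $*$-ring $S$ with unity has generalized comparability for elements if for all $a,b\in S$ there is a central projection $h$ ($h=h^2=h^*$) with $ha\lesssim hb$ and $(1-h)b\lesssim(1-h)a$. *)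

From HB Require Import structures.
From mathcomp Require Import all_boot all_algebra.
From mathcomp Require Import generic_quotient ring_quotient.

Set Implicit Arguments.
Unset Strict Implicit.
Unset Printing Implicit Defensive.

Import GRing.Theory.
Local Open Scope ring_scope.
Local Open Scope quotient_scope.

Record involution (R : pzRingType) := Involution {
  star : R -> R;
  starD : forall a b, star (a + b) = star a + star b;
  starM : forall a b, star (a * b) = star b * star a;
  starK : forall a, star (star a) = a
}.

Lemma star0 (R : pzRingType) (s : involution R) : star s 0 = 0.
Proof.
by apply: (@addrI _ (star s 0)); rewrite -starD !addr0.
Qed.

Lemma starN (R : pzRingType) (s : involution R) (x : R) : star s (- x) = - star s x.
Proof.
by apply: (@addrI _ (star s x)); rewrite -starD !subrr star0.
Qed.

Lemma starB (R : pzRingType) (s : involution R) (x y : R) :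
  star s (x - y) = star s x - star s y.
Proof. by rewrite starD starN. Qed.

Section StarNotions.
Variables (S : pzRingType) (st : S -> S).

Definition is_projection (h : S) : Prop := h * h = h /\ st h = h.

Definition is_central (h : S) : Prop := forall x : S, h * x = x * h.

Definition np_le (a b : S) : Prop :=
  exists x : S, [/\ a = x * a, a = x * b, a = a * st x & a = b * st x].

Definition star_equiv (a b : S) : Prop :=
  exists x y : S,
    [/\ a * st a = x * st x, b * st b = y * st y,
        st a * a = st y * y, st b * b = st x * x &
    [/\ x = a * x, x = x * b, y = b * y & y = y * a]].

Definition dominated (a b : S) : Prop :=
  exists c : S, star_equiv a c /\ np_le c b.

Definition gen_comparability : Prop :=
  forall a b : S, exists h : S,
    [/\ is_projection h, is_central h,
        dominated (h * a) (h * b) & dominated ((1 - h) * b) ((1 - h) * a)].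
End StarNotions.

Record star_ideal (R : pzRingType) (s : involution R) := StarIdeal {
  idmem :> {pred R};
  ideal0 : 0 \in idmem;
  idealB : forall x y, x \in idmem -> y \in idmem -> x - y \in idmem;
  idealMl : forall a x, x \in idmem -> a * x \in idmem;
  idealMr : forall a x, x \in idmem -> x * a \in idmem;
  idealS : forall x, x \in idmem -> star s x \in idmem
}.

Section QuotientStarRing.
Import Quotient.
Variables (R : pzRingType) (s : involution R) (I : star_ideal s).

Definition idpred : {pred R} := fun x => idmem I x.

Lemma idpred_zmod : zmod_closed idpred.
Proof. split; [exact: ideal0 | exact: idealB]. Qed.

HB.instance Definition _ := GRing.isZmodClosed.Build R idpred idpred_zmod.

Definition squot := Quotient.quot idpred.
HB.instance Definition _ := Choice.on squot.
HB.instance Definition _ := GRing.Zmodule.on squot.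
HB.instance Definition _ : EqQuotient R (Quotient.equiv idpred) squot :=
  EqQuotient.on squot.

Definition qone : squot := lift_cst squot 1.
Definition qmul := lift_op2 squot *%R.
Definition qstar := lift_op1 squot (star s).

Canonical pi_qone_morph := PiConst qone.

Lemma qequivE (x y : R) : (x == y %[mod squot]) = (x - y \in idpred).
Proof. by rewrite Quotient.idealrBE. Qed.

Lemma pi_qmul : {morph \pi_squot : x y / x * y >-> qmul x y}.
Proof.
move=> x y; unlock qmul; apply/eqP; rewrite qequivE.
set x' := repr (\pi_squot x); set y' := repr (\pi_squot y).
have hx : x - x' \in idpred by rewrite -qequivE /x' reprK.
have hy : y - y' \in idpred by rewrite -qequivE /y' reprK.
have -> : x * y - x' * y' = (x - x') * y + x' * (y - y').
  by rewrite mulrBl mulrBr addrA addrNK.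
rewrite rpredD //; [exact: idealMr | exact: idealMl].
Qed.
Canonical pi_qmul_morph := PiMorph2 pi_qmul.

Lemma pi_qstar : {morph \pi_squot : x / star s x >-> qstar x}.
Proof.
move=> x; unlock qstar; apply/eqP; rewrite qequivE.
set x' := repr (\pi_squot x).
have hx : x - x' \in idpred by rewrite -qequivE /x' reprK.
rewrite -starB.
exact: idealS.
Qed.
Canonical pi_qstar_morph := PiMorph1 pi_qstar.

Lemma qmulA : associative qmul.
Proof. by move=> x y z; rewrite -[x]reprK -[y]reprK -[z]reprK !piE mulrA. Qed.

Lemma qmul1 : left_id qone qmul.
Proof. by move=> x; rewrite -[x]reprK !piE mul1r. Qed.

Lemma qmulr1 : right_id qone qmul.
Proof. by move=> x; rewrite -[x]reprK !piE mulr1. Qed.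

Lemma qmulDl : left_distributive qmul +%R.
Proof.
move=> x y z; rewrite -[x]reprK -[y]reprK -[z]reprK.
have A : forall u v : R, (\pi_squot u : squot) + \pi_squot v = \pi_squot (u + v) by move=> u v; rewrite raddfD.
by rewrite !A !piE mulrDl -A.
Qed.

Lemma qmulDr : right_distributive qmul +%R.
Proof.
move=> x y z; rewrite -[x]reprK -[y]reprK -[z]reprK.
have A : forall u v : R, (\pi_squot u : squot) + \pi_squot v = \pi_squot (u + v) by move=> u v; rewrite raddfD.
by rewrite !A !piE mulrDr -A.
Qed.

HB.instance Definition _ :=
  GRing.Zmodule_isPzRing.Build squot qmulA qmul1 qmulr1 qmulDl qmulDr.

Lemma qstarD (a b : squot) : qstar (a + b) = qstar a + qstar b.
Proof.
have A : forall u v : R, (\pi_squot u : squot) + \pi_squot v = \pi_squot (u + v) by move=> u v; rewrite raddfD.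
by rewrite -[a]reprK -[b]reprK A !piE starD -A.
Qed.

Lemma qstarM (a b : squot) : qstar (a * b) = qstar b * qstar a.
Proof.
rewrite -[a]reprK -[b]reprK.
change (qstar (qmul (\pi_squot (repr a)) (\pi_squot (repr b))) =
        qmul (qstar (\pi_squot (repr b))) (qstar (\pi_squot (repr a)))).
by rewrite !piE starM.
Qed.

Lemma qstarK (a : squot) : qstar (qstar a) = a.
Proof. by rewrite -[a]reprK !piE starK. Qed.

Definition quot_involution : involution squot :=
  Involution qstarD qstarM qstarK.

End QuotientStarRing.

From HB Require Import structures.
From mathcomp Require Import all_boot all_algebra.
From mathcomp Require Import generic_quotient ring_quotient.

(* Every notion involved (natural order, equivalence, dominance, central
   projection) is defined by ring equations between products of elements and
   their adjoints, so it is carried along by any unital *-ring morphism; the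
   quotient map R -> R/I is such a morphism and is onto, so a central
   projection witnessing comparability of lifts of a, b in R maps to one
   witnessing comparability of a, b in R/I. *)

Set Implicit Arguments.
Unset Strict Implicit.
Unset Printing Implicit Defensive.
Import GRing.Theory.
Local Open Scope ring_scope.
Local Open Scope quotient_scope.

Section StarMorphism.
Variables (S T : pzRingType) (sS : S -> S) (sT : T -> T) (f : {rmorphism S -> T}).
Hypothesis fstar : forall x, f (sS x) = sT (f x).

Lemma np_le_morph a b : np_le sS a b -> np_le sT (f a) (f b).
Proof.
case=> x [h1 h2 h3 h4]; exists (f x).
by rewrite -!fstar -!rmorphM -h1 -h2 -h3 -h4.
Qed.

Lemma star_equiv_morph a b : star_equiv sS a b -> star_equiv sT (f a) (f b).
Proof.
case=> x [y [h1 h2 h3 h4 [h5 h6 h7 h8]]]; exists (f x), (f y).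
by rewrite -!fstar -!rmorphM -h1 -h2 -h3 -h4 -h5 -h6 -h7 -h8.
Qed.

Lemma dominated_morph a b : dominated sS a b -> dominated sT (f a) (f b).
Proof.
by case=> c [eq_ac le_cb]; exists (f c); split;
  [exact: star_equiv_morph | exact: np_le_morph].
Qed.

Lemma is_projection_morph h : is_projection sS h -> is_projection sT (f h).
Proof. by case=> hh hstar; split; rewrite -?fstar -?rmorphM ?hh ?hstar. Qed.

Hypothesis f_surj : forall y, exists x, y = f x.

Lemma is_central_morph h : is_central h -> is_central (f h).
Proof. by move=> hC y; have [x ->] := f_surj y; rewrite -!rmorphM hC. Qed.

Lemma gen_comparability_morph : gen_comparability sS -> gen_comparability sT.
Proof.
move=> GC a' b'; have [a ->] := f_surj a'; have [b ->] := f_surj b'.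
have [h [hP hC dom_ab dom_ba]] := GC a b.
exists (f h); split; first exact: is_projection_morph.
- exact: is_central_morph.
- by rewrite -!rmorphM; apply: dominated_morph.
- by rewrite -(rmorph1 f) -rmorphB -!rmorphM; apply: dominated_morph.
Qed.

End StarMorphism.

Section QuotientMap.
Variables (R : pzRingType) (s : involution R) (I : star_ideal s).

Definition squot_pi : R -> squot I := \pi_(squot I).

HB.instance Definition _ := GRing.Additive.copy squot_pi (\pi_(squot I)).

Lemma squot_pi_is_monoid_morphism : monoid_morphism squot_pi.
Proof. by split=> [|x y]; rewrite /squot_pi ?piE // pi_qmul. Qed.

HB.instance Definition _ := GRing.isMonoidMorphism.Build R (squot I)
  squot_pi squot_pi_is_monoid_morphism.

Lemma squot_pi_star x : squot_pi (star s x) = star (quot_involution I) (squot_pi x).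
Proof. exact: pi_qstar. Qed.

Lemma squot_pi_surj (y : squot I) : exists x, y = squot_pi x.
Proof. by exists (repr y); rewrite /squot_pi reprK. Qed.

End QuotientMap.

Theorem mainTheorem18 (R : pzRingType) (s : involution R) (I : star_ideal s) :
  gen_comparability (star s) ->
  gen_comparability (star (quot_involution I)).
Proof. exact: gen_comparability_morph (squot_pi_star I) (@squot_pi_surj _ _ I). Qed.
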